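(* Let $K\subset S^3$ be a knot and $\mathbb{I}$ a sequence of $m$ crossing changes turning $K$ into the unknot. Let $\mathfrak{f}^+_\mathbb{I}:\mathbb{H}(K)\to\mathbb{A}$ and $\mathfrak{f}^-_\mathbb{I}:\mathbb{A}\to\mathbb{H}(K)$ be the homogeneous $\mathbb{A}$-module maps induced on homology by composing the crossing-change chain maps along $\mathbb{I}$, so that $\mathfrak{f}^-_\mathbb{I}\circ\mathfrak{f}^+_\mathbb{I}$ and $\mathfrak{f}^+_\mathbb{I}\circ\mathfrak{f}^-_\mathbb{I}$ are multiplication by $\mathsf{w}^{m}$. Then the composition $\mathbb{A}\to\mathbb{A}(K)$ of $\mathfrak{f}^-_\mathbb{I}$ with the projection $\mathbb{H}(K)\to\mathbb{A}(K)$ is injective; the restriction of $\mathfrak{f}^+_\mathbb{I}$ to $\mathbb{T}(K)$ is zero, so $\mathfrak{f}^+_\mathbb{I}$ induces a map $\mathfrak{f}^+:\mathbb{A}(K)\to\mathbb{A}$, which is injective; and these induced maps are homogeneous with respect to the Alexander grading.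
   Context: Work over $\mathbb{F}=\mathbb{Z}/2$, $\mathbb{A}=\mathbb{F}[\mathsf{u},\mathsf{w}]$. $\mathrm{CF}(K)$ is the knot Floer chain complex of $K$ over $\mathbb{A}$ (equivalent to $CFK^\infty$), with Alexander grading $A(\mathsf{u}^a\mathsf{w}^bx)=A(x)-a+b$; $\mathrm{CF}(\text{unknot})\simeq\mathbb{A}$. $\mathbb{H}(K)$ is its homology, $\mathbb{T}(K)=\{x\in\mathbb{H}(K): ax=0\text{ for some }0\ne a\in\mathbb{A}\}$, and $\mathbb{A}(K)=\mathbb{H}(K)/\mathbb{T}(K)$. For each crossing change from a knot $J$ to $J'$ there are homogeneous chain maps $\mathrm{CF}(J)\to\mathrm{CF}(J')$ and $\mathrm{CF}(J')\to\mathrm{CF}(J)$ whose compositions in either order are chain homotopic to multiplication by $\mathsf{w}$; composing these along $\mathbb{I}$ yields the maps above. *)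

From HB Require Import structures.
From mathcomp Require Import all_boot all_order all_algebra.
From mathcomp Require Import multinomials.mpoly.
Set Implicit Arguments. Unset Strict Implicit. Unset Printing Implicit Defensive.
Import GRing.Theory.
Local Open Scope ring_scope.

Definition Aring : comNzRingType := {mpoly 'F_2[2]}.
Definition uvar : Aring := 'X_(0 : 'I_2).
Definition wvar : Aring := 'X_(1 : 'I_2).

Definition alex_mono (mo : 'X_{1..2}) : int :=
  (mo (1 : 'I_2))%:Z - (mo (0 : 'I_2))%:Z.

(* p is homogeneous of Alexander degree k (0 is homogeneous of every degree) *)
Definition Ahomog (k : int) (p : Aring) : Prop :=
  forall mo, mo \in msupp (p : {mpoly 'F_2[2]}) -> alex_mono mo = k.

(* A grading Hgr on an A-module H: Hgr k is the set of homogeneous elements of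
   degree k; H is the direct sum of the Hgr k, compatibly with the grading of A. *)
Definition graded_module (H : lmodType Aring) (Hgr : int -> H -> Prop) : Prop :=
  [/\ (forall k, Hgr k 0),
      (forall k x y, Hgr k x -> Hgr k y -> Hgr k (x + y)),
      (forall j k (a : Aring) x, Ahomog j a -> Hgr k x -> Hgr (j + k) (a *: x)),
      (forall x : H, exists s : seq (int * H),
          (forall p, p \in s -> Hgr p.1 p.2) /\ x = \sum_(p <- s) p.2) &
      (forall s : seq (int * H),
          uniq (map fst s) -> (forall p, p \in s -> Hgr p.1 p.2) ->
          \sum_(p <- s) p.2 = 0 -> all (fun p => p.2 == 0) s)].

Definition torsion (H : lmodType Aring) (x : H) : Prop :=
  exists a : Aring, a != 0 /\ a *: x = 0.

Definition homog_map_HA (H : lmodType Aring) (Hgr : int -> H -> Prop)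
  (f : H -> Aring) : Prop :=
  exists d : int, forall k x, Hgr k x -> Ahomog (k + d) (f x).
Definition homog_map_AH (H : lmodType Aring) (Hgr : int -> H -> Prop)
  (f : Aring -> H) : Prop :=
  exists d : int, forall k a, Ahomog k a -> Hgr (k + d) (f a).

(* Induced grading on the quotient A(K) = H / T(H): the class of y is
   homogeneous of degree k iff it is the class of some x in Hgr k. *)
Definition quot_homog (H : lmodType Aring) (Hgr : int -> H -> Prop)
  (k : int) (y : H) : Prop :=
  exists x, Hgr k x /\ torsion (y - x).

From HB Require Import structures.
From mathcomp Require Import all_boot all_order all_algebra.
From mathcomp Require Import multinomials.mpoly.
Import GRing.Theory.
Local Open Scope ring_scope.

(* Since A is a domain, an A-linear map into A kills torsion: from c x = 0 with
   c <> 0 we get c f(x) = 0, hence f(x) = 0.  Thus f^+ (f^- a - f^- b) = w^m (a - b)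
   vanishes when f^- a - f^- b is torsion, forcing a = b; and f^+ x = f^+ y gives
   w^m (x - y) = f^- (f^+ (x - y)) = 0, so x - y is torsion.  Being constant on
   torsion classes, f^+ and the projection of f^- are homogeneous for the
   quotient grading with the same degree shifts as f^+ and f^-. *)

Lemma wvar_expn_neq0 (m : nat) : wvar ^+ m != 0.
Proof.
apply: expf_neq0; apply/eqP => /(congr1 (mcoeff U_(1 : 'I_2)%MM)).
by rewrite /wvar mcoeffX eqxx mcoeff0.
Qed.

Lemma torsion0 (H : lmodType Aring) : torsion (0 : H).
Proof. by exists 1; rewrite oner_neq0 scaler0. Qed.

Section LinearToA.

Variables (H : lmodType Aring) (f : {linear H -> Aring^o}).

Lemma linear_torsion_eq0 (x : H) : torsion x -> f x = 0.
Proof.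
move=> [c [c_neq0 cx0]]; apply/eqP.
have : c * f x == 0 by rewrite -[c * _]linearZ cx0 linear0.
by rewrite mulf_eq0 (negPf c_neq0).
Qed.

Lemma linear_torsionB_eq (x y : H) : torsion (x - y) -> f x = f y.
Proof. by move/linear_torsion_eq0/eqP; rewrite linearB subr_eq0 => /eqP. Qed.

Lemma homog_map_quot (Hgr : int -> H -> Prop) : homog_map_HA Hgr f ->
  exists d : int, forall k (y : H), quot_homog Hgr k y -> Ahomog (k + d) (f y).
Proof.
by move=> [d homf]; exists d => k y [x [gr_x /linear_torsionB_eq ->]]; apply: homf.
Qed.

End LinearToA.

Lemma homog_map_to_quot (H : lmodType Aring) (Hgr : int -> H -> Prop)
    (f : Aring -> H) : homog_map_AH Hgr f ->
  exists d : int, forall k (a : Aring), Ahomog k a -> quot_homog Hgr (k + d) (f a).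
Proof.
move=> [d homf]; exists d => k a homa; exists (f a).
by split; [apply: homf | rewrite subrr; apply: torsion0].
Qed.

Section QuasiInverse.

Variables (H : lmodType Aring) (fp : {linear H -> Aring^o}) (fm : {linear Aring^o -> H}).
Variables (c : Aring) (c_neq0 : c != 0).
Hypotheses (fmK : forall x : H, fm (fp x) = c *: x)
           (fpK : forall a : Aring, fp (fm a) = c * a).

Lemma quot_map_inj (a b : Aring) : torsion (fm a - fm b) -> a = b.
Proof.
move/(@linear_torsionB_eq _ fp); rewrite !fpK => /eqP.
by rewrite -subr_eq0 -mulrBr mulf_eq0 (negPf c_neq0) subr_eq0 => /eqP.
Qed.

Lemma linear_eq_torsionB (x y : H) : fp x = fp y -> torsion (x - y).
Proof.
by move=> fpxy; exists c; rewrite c_neq0 -fmK linearB /= fpxy subrr linear0.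
Qed.

End QuasiInverse.

Theorem lemma3p4 (H : lmodType Aring) (Hgr : int -> H -> Prop) (m : nat)
  (fp : {linear H -> Aring^o}) (fm : {linear Aring^o -> H}) :
  graded_module Hgr ->
  homog_map_HA Hgr fp ->
  homog_map_AH Hgr fm ->
  (forall x : H, fm (fp x) = wvar ^+ m *: x) ->
  (forall a : Aring, fp (fm a) = wvar ^+ m * a) ->
  [/\ (* A -> H -> A(K) is injective *)
      (forall a b : Aring, torsion (fm a - fm b) -> a = b),
      (* f^+ vanishes on T(K) *)
      (forall x : H, torsion x -> fp x = 0),
      (* the induced map A(K) -> A is injective *)
      (forall x y : H, fp x = fp y -> torsion (x - y)),
      (* the induced map A(K) -> A is homogeneous *)
      (exists d : int, forall k (y : H), quot_homog Hgr k y -> Ahomog (k + d) (fp y)) &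
      (* the map A -> A(K) is homogeneous *)
      (exists d : int, forall k (a : Aring), Ahomog k a -> quot_homog Hgr (k + d) (fm a))].
Proof.
move=> _ homfp homfm fmK fpK; split.
- exact: quot_map_inj (wvar_expn_neq0 m) fpK.
- exact: linear_torsion_eq0.
- exact: linear_eq_torsionB (wvar_expn_neq0 m) fmK.
- exact: homog_map_quot.
- exact: homog_map_to_quot.
Qed.
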